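(* Let $\mathcal H$ be an $n$-dimensional (real or complex) inner product space, $P:\mathcal H\to\mathcal H$ a linear projection ($P^2=P$) and $Q=I-P$. Let $r_0$ and $r_1$ be the multiplicities of the eigenvalues $0$ and $1$ of $P^\dagger P$ (zero if not an eigenvalue). Then $Q^\dagger Q$ has eigenvalue $0$ with multiplicity $n-r_0$ and eigenvalue $1$ with multiplicity $2r_0+r_1-n$.
   Context: $P^\dagger$, $Q^\dagger$ denote adjoints with respect to the inner product; $P$ need not be an orthogonal projection; $I$ is the identity. Multiplicities are those of eigenvalues of the self-adjoint positive semidefinite operators $P^\dagger P$, $Q^\dagger Q$. *)

From HB Require Import structures.
From mathcomp Require Import all_boot all_order all_algebra.
Set Implicit Arguments. Unset Strict Implicit. Unset Printing Implicit Defensive.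
Import Order.TTheory GRing.Theory Num.Theory.
Local Open Scope ring_scope.

Definition cadj (C : numClosedFieldType) (n : nat) (A : 'M[C]_n) : 'M[C]_n :=
  (map_mx Num.conj A)^T.

(* Multiplicity of a as an eigenvalue of A: dimension of its eigenspace
   (0 if a is not an eigenvalue).  For self-adjoint matrices this equals the
   algebraic multiplicity. *)
Definition eigmult (F : fieldType) (n : nat) (A : 'M[F]_n) (a : F) : nat :=
  \rank (eigenspace A a).

From HB Require Import structures.
From mathcomp Require Import all_boot all_order all_algebra.
From mathcomp Require Import zify.
Import Order.TTheory GRing.Theory Num.Theory.
Local Open Scope ring_scope.

Set Implicit Arguments. Unset Strict Implicit.

(* Both cases are instances of a field with an involutive automorphism [conj]
   whose hermitian form [\sum_i x_i * conj x_i] is anisotropic, with adjoint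
   [A^* = (conj A)^T].  Multiplicities of 0 and 1 are coranks, and
   [rank (A^* A) = rank A] gives the first claim at once.  Expanding
   [Q^* Q - 1 = P^* P - P - P^*] shows that its left kernel is that of
   [row_mx P P^*], so its rank is [dim (P^* + P)]; symmetrically the left
   kernel of [P^* P - 1] is [P^* :&: P].  Grassmann's formula
   [dim (P^* + P) + dim (P^* :&: P) = 2 rank P] then gives the second claim. *)

Lemma mxrank_eq_of_kernels (F : fieldType) n p q
    (X : 'M[F]_(n, p)) (Y : 'M[F]_(n, q)) :
  (forall M : 'M[F]_n, M *m X = 0 <-> M *m Y = 0) -> \rank X = \rank Y.
Proof.
move=> eq_ker.
have kerXY : (kermx X :=: kermx Y)%MS.
  by apply/eqmxP/andP; split; apply/sub_kermxP; apply/eq_ker; exact: mulmx_ker.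
have := mxrank_ker X; rewrite kerXY mxrank_ker.
have := rank_leq_row X; have := rank_leq_row Y; lia.
Qed.

Lemma eigmultE (F : fieldType) n (A : 'M[F]_n) a :
  eigmult A a = (n - \rank (A - a%:M)%R)%N.
Proof. by rewrite /eigmult /eigenspace mxrank_ker. Qed.

Section Idempotent.
Variables (F : fieldType) (n : nat) (P : 'M[F]_n).
Hypothesis idemP : P *m P = P.

Lemma idem_compl : (1%:M - P) *m (1%:M - P) = 1%:M - P.
Proof. by rewrite mulmxBl mul1mx mulmxBr mulmx1 idemP subrr subr0. Qed.

Lemma idem_submxE m (A : 'M[F]_(m, n)) : (A <= P)%MS = (A *m (1%:M - P) == 0).
Proof.
rewrite mulmxBr mulmx1 subr_eq0; apply/idP/eqP => [/submxP[D ->]|->].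
  by rewrite -mulmxA idemP.
exact: submxMl.
Qed.

Lemma mxrank_idem_compl : (\rank P + \rank (1%:M - P)%R)%N = n.
Proof.
have -> : \rank (1%:M - P) = \rank (kermx P).
  apply/eqmx_rank/andP; split.
    by apply/sub_kermxP; rewrite mulmxBl mul1mx idemP subrr.
  have -> : kermx P = kermx P *m (1%:M - P) by rewrite mulmxBr mulmx1 mulmx_ker subr0.
  exact: submxMl.
rewrite mxrank_ker; have := rank_leq_row P; lia.
Qed.

End Idempotent.

Section Adjoint.
Variables (F : fieldType) (conj : {rmorphism F -> F}).
Hypothesis conjK : involutive conj.
Hypothesis conj_anisotropic :
  forall k (x : 'I_k -> F), \sum_i x i * conj (x i) = 0 -> forall i, x i = 0.

Definition adjmx m n (A : 'M[F]_(m, n)) : 'M[F]_(n, m) := (map_mx conj A)^T.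

Lemma adjmxM m n p (A : 'M[F]_(m, n)) (B : 'M[F]_(n, p)) :
  adjmx (A *m B) = adjmx B *m adjmx A.
Proof. by rewrite /adjmx map_mxM trmx_mul. Qed.

Lemma adjmxK m n (A : 'M[F]_(m, n)) : adjmx (adjmx A) = A.
Proof. by apply/matrixP => i j; rewrite !mxE conjK. Qed.

Lemma adjmxB m n (A B : 'M[F]_(m, n)) : adjmx (A - B) = adjmx A - adjmx B.
Proof. by rewrite /adjmx map_mxB linearB. Qed.

Lemma adjmx0 m n : adjmx (0 : 'M[F]_(m, n)) = 0.
Proof. by rewrite /adjmx map_mx0 trmx0. Qed.

Lemma adjmx1 n : adjmx (1%:M : 'M[F]_n) = 1%:M.
Proof. by rewrite /adjmx map_mx1 trmx1. Qed.

Lemma mxrank_adjmx m n (A : 'M[F]_(m, n)) : \rank (adjmx A) = \rank A.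
Proof. by rewrite mxrank_tr mxrank_map. Qed.

Lemma mxrank_row_mx_adjmx m n1 n2 (A : 'M[F]_(m, n1)) (B : 'M[F]_(m, n2)) :
  \rank (row_mx A B) = \rank (col_mx (adjmx A) (adjmx B)).
Proof. by rewrite /adjmx -tr_row_mx -map_row_mx mxrank_tr mxrank_map. Qed.

Lemma adjmx_anisotropic m n (A : 'M[F]_(m, n)) : A *m adjmx A = 0 -> A = 0.
Proof.
move=> AAadj0; apply/matrixP => i j; rewrite mxE.
have := congr1 (fun M : 'M_m => M i i) AAadj0; rewrite !mxE.
under eq_bigr do rewrite !mxE.
by move/conj_anisotropic; apply.
Qed.

Lemma mxrank_adjMmx m n (A : 'M[F]_(m, n)) : \rank (adjmx A *m A) = \rank A.
Proof.
rewrite -(mxrank_adjmx A); apply: mxrank_eq_of_kernels => M; split=> [MAA0|].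
  by apply: adjmx_anisotropic; rewrite adjmxM adjmxK mulmxA -(mulmxA M) MAA0 mul0mx.
by rewrite mulmxA => ->; rewrite mul0mx.
Qed.

Section AdjointIdempotent.
Variables (n : nat) (P : 'M[F]_n).
Hypothesis idemP : P *m P = P.

Lemma adjmx_idem : adjmx P *m adjmx P = adjmx P.
Proof. by rewrite -adjmxM idemP. Qed.

(* [Q^* Q - 1 = P^* P - P - P^*]; if [M] kills it, then [u := M P^*] satisfies
   [u P = M P + u], whence [M P = 0], [u P = u] and [u u^* = u M^* = 0]. *)
Lemma mxrank_adjMmx_compl_sub1 :
  \rank (adjmx (1%:M - P) *m (1%:M - P) - 1%:M) = \rank (col_mx (adjmx P) P).
Proof.
have -> : \rank (col_mx (adjmx P) P) = \rank (row_mx P (adjmx P)).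
  by rewrite mxrank_row_mx_adjmx adjmxK.
rewrite adjmxB adjmx1.
have -> : (1%:M - adjmx P) *m (1%:M - P) - 1%:M = adjmx P *m P - P - adjmx P.
  rewrite mulmxBl !mulmxBr !mul1mx mulmx1 opprB.
  by rewrite addrAC [1%:M - P - 1%:M]addrAC subrr add0r addrCA addrA.
apply: mxrank_eq_of_kernels => M; rewrite mul_mx_row; split => [M0|].
  set u := M *m adjmx P.
  have uP : u *m P = M *m P + u.
    by apply/eqP; rewrite -subr_eq0 opprD addrA -!mulmxA -!mulmxBr M0.
  have MP0 : M *m P = 0.
    have := congr1 (mulmx^~ P) uP.
    rewrite -!mulmxA idemP mulmxDl -mulmxA idemP mulmxA -/u.
    by rewrite -[LHS]add0r => /addIr /esym.
  have uu0 : u *m adjmx u = 0.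
    by rewrite adjmxM adjmxK mulmxA uP MP0 add0r /u -mulmxA -adjmxM MP0 adjmx0 mulmx0.
  by rewrite MP0 (adjmx_anisotropic uu0) row_mx0.
rewrite -row_mx0 => /eq_row_mx[MP0 MPadj0].
by rewrite !mulmxBr mulmxA MP0 MPadj0 mul0mx !subrr.
Qed.

Lemma mxrank_capmx_adjmx :
  \rank (adjmx P :&: P)%MS = (n - \rank (row_mx (1%:M - P) (adjmx (1%:M - P))))%N.
Proof.
have adjQ : adjmx (1%:M - P) = 1%:M - adjmx P by rewrite adjmxB adjmx1.
rewrite -mxrank_ker adjQ; apply/eqmx_rank/andP; split.
  apply/sub_kermxP; rewrite mul_mx_row -row_mx0; congr row_mx; apply/eqP.
    by rewrite -(idem_submxE idemP) capmxSr.
  by rewrite -(idem_submxE adjmx_idem) capmxSl.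
have := mulmx_ker (row_mx (1%:M - P) (1%:M - adjmx P)).
rewrite mul_mx_row -row_mx0 => /eq_row_mx[/eqP kerP /eqP kerPadj].
by rewrite sub_capmx (idem_submxE idemP) (idem_submxE adjmx_idem) kerP kerPadj.
Qed.

End AdjointIdempotent.

Lemma eigmult_adjMmx_idem_compl n (P : 'M[F]_n) : P *m P = P ->
  eigmult (adjmx (1%:M - P) *m (1%:M - P)) 0 = (n - eigmult (adjmx P *m P) 0)%N /\
  (eigmult (adjmx (1%:M - P) *m (1%:M - P)) 1)%:Z =
    2 * (eigmult (adjmx P *m P) 0)%:Z + (eigmult (adjmx P *m P) 1)%:Z - n%:Z.
Proof.
move=> idemP; have idemQ := idem_compl idemP.
have rankPQ := mxrank_idem_compl idemP.
have rank_sum := mxrank_adjMmx_compl_sub1 idemP.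
have rank_cap := mxrank_capmx_adjmx idemP.
have := mxrank_adjMmx_compl_sub1 idemQ; rewrite subKr => rankPP1.
rewrite mxrank_row_mx_adjmx adjmxK in rank_cap.
have grassmann := mxrank_sum_cap (adjmx P) P.
rewrite addsmxE mxrank_adjmx in grassmann.
have := rank_leq_col (col_mx (adjmx P) P).
have := rank_leq_col (col_mx (adjmx (1%:M - P)) (1%:M - P)).
rewrite !eigmultE raddf0 !subr0 !mxrank_adjMmx rank_sum rankPP1; lia.
Qed.

End Adjoint.

Lemma sum_sqr_norm_eq0 (R : numDomainType) k (x : 'I_k -> R) :
  \sum_i `|x i| ^+ 2 = 0 -> forall i, x i = 0.
Proof.
move=> sum0 i; apply/eqP; rewrite -normr_eq0 -sqrf_eq0.
by rewrite (psumr_eq0P _ sum0) // => j _; exact: exprn_ge0.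
Qed.

Lemma conjC_anisotropic (C : numClosedFieldType) k (x : 'I_k -> C) :
  \sum_i x i * (x i)^* = 0 -> forall i, x i = 0.
Proof. by under eq_bigr do rewrite -normCK; exact: sum_sqr_norm_eq0. Qed.

Lemma real_anisotropic (R : realDomainType) k (x : 'I_k -> R) :
  \sum_i x i * x i = 0 -> forall i, x i = 0.
Proof.
by under eq_bigr do rewrite -expr2 -(real_normK (num_real _)); exact: sum_sqr_norm_eq0.
Qed.

Theorem theorem13 :
  (forall (C : numClosedFieldType) (n : nat) (P : 'M[C]_n),
    P *m P = P ->
    let Q := 1%:M - P in
    let r0 := eigmult (cadj P *m P) 0 in
    let r1 := eigmult (cadj P *m P) 1 in
    eigmult (cadj Q *m Q) 0 = (n - r0)%N /\
    (eigmult (cadj Q *m Q) 1)%:Z = 2 * r0%:Z + r1%:Z - n%:Z)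
  /\
  (forall (R : rcfType) (n : nat) (P : 'M[R]_n),
    P *m P = P ->
    let Q := 1%:M - P in
    let r0 := eigmult (P^T *m P) 0 in
    let r1 := eigmult (P^T *m P) 1 in
    eigmult (Q^T *m Q) 0 = (n - r0)%N /\
    (eigmult (Q^T *m Q) 1)%:Z = 2 * r0%:Z + r1%:Z - n%:Z).
Proof.
split=> [C n P idemP | R n P idemP].
  exact: (eigmult_adjMmx_idem_compl conjCK (@conjC_anisotropic C) idemP).
have trE m (A : 'M[R]_m) : A^T = adjmx idfun A by rewrite /adjmx map_mx_id.
rewrite /= !trE.
exact: (@eigmult_adjMmx_idem_compl _ idfun (fun _ => erefl) (@real_anisotropic R) _ _ idemP).
Qed.
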